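(* Let $(R,+,\cdot)$ be a Commutative Ring with Unity $1$ and additive identity $0$, and let $(\mathbb S,+_{\mathbb S},\cdot_{\mathbb S})$ be the structure on $\mathbb S=R\times R$ described in the context. Then $(\mathbb S,+_{\mathbb S},\cdot_{\mathbb S})$ is an S-Ring with $(\mathbb S_0,+_{\mathbb S},\cdot_{\mathbb S})\cong(R,+,\cdot)$; that is, $(\mathbb S,+_{\mathbb S},\cdot_{\mathbb S})$ is a Proper S-Ring Extension of $(R,+,\cdot)$.
   Context: Construction: $\mathbb S=R\times R=\{(x,y):x,y\in R\}$, with $\mathbf 0=(0,0)$ and distinguished element $\mathbf 1=(1,0)$, and operations $(x,y)+_{\mathbb S}(u,v)=(x+u,\,y+v)$ and $(x,y)\cdot_{\mathbb S}(u,v)=(x\cdot u+y+v-x\cdot v-y\cdot u,\;y\cdot v+x\cdot v+y\cdot u)$. General definitions (written for a structure $(\mathbb S,+,\cdot)$ with zero $0$ and distinguished element $1$): An S-Structure is a triple $(\mathbb S,+,\cdot)$ where $+,\cdot$ are binary operations on the set $\mathbb S$ such that $(\mathbb S,+)$ is a commutative group with identity $0$ (inverse $-s$, $s-t:=s+(-t)$), $\mathbb S$ is closed under $\cdot$, and there is $s\in\mathbb S$ with $0\cdot s\neq0$ or $s\cdot0\neq0$. Commutative: $s\cdot t=t\cdot s$ for all $s,t$. For $\alpha\in\mathbb S$: $\mathbb S_\alpha=\{s:0\cdot s=s\cdot0=\alpha\}$, $\Lambda=\{\alpha:\mathbb S_\alpha\neq\emptyset\}$. Wheel Distributive: $s\cdot(t+r)+(s\cdot0)=(s\cdot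 t)+(s\cdot r)$ for all $s,t,r$. S-Associative: for all $m,n\in\mathbb S_0$, $s\in\mathbb S$, $m\cdot(n\cdot s)=(m\cdot n)\cdot s-([(m-1)\cdot(n-1)]\cdot(0\cdot s))$. Base: if $\mathbb S_0\neq\emptyset$, $\alpha\in\Lambda$, then $q\in\mathbb S_\alpha$ is a Base for $\mathbb S_\alpha$ if $q+\beta\in\mathbb S_\alpha$ for all $\beta\in\mathbb S_0$ and each $s\in\mathbb S_\alpha$ is $q+\beta$ for some $\beta\in\mathbb S_0$; Coordinated: $\mathbb S_0\neq\emptyset$ and each $\mathbb S_\alpha$, $\alpha\in\Lambda$, has a Base. Standard Bases (for a Coordinated Commutative S-Structure): there is a specified $q_0(1)\in\mathbb S_1$ which is a Base for $\mathbb S_1$, and for each $\alpha\in\Lambda$, $q_0(\alpha):=\alpha\cdot(q_0(1)+1)-1$ lies in $\mathbb S_\alpha$ and is a Base for $\mathbb S_\alpha$. Essential S-Structure: Commutative, Wheel Distributive, S-Associative, has Standard Bases, $0,1\in\mathbb S_0$, and $\mathbb S_0=\{1\cdot x:x\in\mathbb S_0\}$. Unity: $e\in\Lambda$ with $e\cdot s=s\cdot e=s$ for all $s$. S-Ring: Essential S-Structure with a Unity. S-Extension: $(\mathbb S,+,\cdot)$ is an S-Extension of $(F,+_F,\cdot_F)$ if $F$ is closed under $+_F$ and $\cdot_F$, $(\mathbb S,+,\cdot)$ is an S-Structure, and there is $F_{\mathbb S}\subset\mathbb S$ and an isomorphism $\phi:(F,+_F,\cdot_F)\to(F_{\mathbb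 S},+,\cdot)$. It is a Proper S-Extension if moreover $(\mathbb S_0,+,\cdot)\cong(F,+_F,\cdot_F)$. A Proper S-Ring Extension is an S-Ring that is a Proper S-Extension. *)

From HB Require Import structures.
From mathcomp Require Import all_boot all_order all_algebra.
Set Implicit Arguments. Unset Strict Implicit. Unset Printing Implicit Defensive.
Import GRing.Theory.
Local Open Scope ring_scope.

(* Generic notions for a structure (T, add, mul) with zero [z], additive
   inverse [opp] and distinguished element [o] ("1"). *)
Section SStructureDefs.
Variables (T : Type) (add mul : T -> T -> T) (opp : T -> T) (z o : T).

Definition ssub (s t : T) : T := add s (opp t).

Definition is_comm_group : Prop :=
  (forall a b c, add a (add b c) = add (add a b) c) /\
  (forall a b, add a b = add b a) /\
  (forall a, add z a = a) /\
  (forall a, add a (opp a) = z).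

Definition S_Structure : Prop :=
  is_comm_group /\ exists s, mul z s <> z \/ mul s z <> z.

Definition S_Commutative : Prop := forall s t, mul s t = mul t s.

Definition S_sub (alpha s : T) : Prop := mul z s = alpha /\ mul s z = alpha.

Definition S_Lambda (alpha : T) : Prop := exists s, S_sub alpha s.

Definition Wheel_Distributive : Prop :=
  forall s t r, add (mul s (add t r)) (mul s z) = add (mul s t) (mul s r).

Definition S_Associative : Prop :=
  forall m n s, S_sub z m -> S_sub z n ->
    mul m (mul n s) =
    ssub (mul (mul m n) s) (mul (mul (ssub m o) (ssub n o)) (mul z s)).

Definition S_Base (alpha q : T) : Prop :=
  S_sub alpha q /\
  (forall beta, S_sub z beta -> S_sub alpha (add q beta)) /\
  (forall s, S_sub alpha s -> exists beta, S_sub z beta /\ s = add q beta).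

Definition S_Coordinated : Prop :=
  (exists m, S_sub z m) /\ (forall alpha, S_Lambda alpha -> exists q, S_Base alpha q).

Definition Standard_Bases : Prop :=
  S_Coordinated /\ S_Commutative /\
  exists q1, S_Base o q1 /\
    forall alpha, S_Lambda alpha -> S_Base alpha (ssub (mul alpha (add q1 o)) o).

Definition Essential_S_Structure : Prop :=
  S_Structure /\ S_Commutative /\ Wheel_Distributive /\ S_Associative /\
  Standard_Bases /\ S_sub z z /\ S_sub z o /\
  (forall s, S_sub z s <-> exists x, S_sub z x /\ s = mul o x).

Definition S_Unity (e : T) : Prop :=
  S_Lambda e /\ forall s, mul e s = s /\ mul s e = s.

Definition S_Ring : Prop := Essential_S_Structure /\ exists e, S_Unity e.

Definition iso_onto (F : Type) (addF mulF : F -> F -> F) (P : T -> Prop)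
  (phi : F -> T) : Prop :=
  (forall x, P (phi x)) /\ injective phi /\ (forall t, P t -> exists x, phi x = t) /\
  (forall x y, phi (addF x y) = add (phi x) (phi y)) /\
  (forall x y, phi (mulF x y) = mul (phi x) (phi y)).

Definition S_Extension (F : Type) (addF mulF : F -> F -> F) : Prop :=
  S_Structure /\ exists (P : T -> Prop) (phi : F -> T), iso_onto addF mulF P phi.

Definition Proper_S_Extension (F : Type) (addF mulF : F -> F -> F) : Prop :=
  S_Extension addF mulF /\ exists psi : F -> T, iso_onto addF mulF (S_sub z) psi.

Definition Proper_S_Ring_Extension (F : Type) (addF mulF : F -> F -> F) : Prop :=
  S_Ring /\ Proper_S_Extension addF mulF.

End SStructureDefs.

Section Construction.
Variable R : comNzRingType.

Definition Sadd (s t : R * R) : R * R := (s.1 + t.1, s.2 + t.2).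
Definition Sopp (s : R * R) : R * R := (- s.1, - s.2).
Definition Szero : R * R := (0, 0).
Definition Sone : R * R := (1, 0).
Definition Smul (s t : R * R) : R * R :=
  let: (x, y) := s in let: (u, v) := t in
  (x * u + y + v - x * v - y * u, y * v + x * v + y * u).

End Construction.

From Pilot Require Import Defs.
From mathcomp Require Import all_boot all_order all_algebra.
From mathcomp Require Import ring.
Import GRing.Theory.
Local Open Scope ring_scope.

(* Multiplying by 0 = (0,0) reads off the second coordinate:
   0 (x,y) = (x,y) 0 = (y,0).  Hence S_alpha is nonempty exactly for
   alpha = (a,0), in which case it is the line {(x,a)}, a translate of
   S_0 = R x {0} by the base (0,a).  On S_0 the product is that of R, so
   x |-> (x,0) is the required isomorphism, and (1,0) is a unity.  All
   remaining axioms are polynomial identities in the coordinates. *)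

Section SRingExtension.
Variable R : comNzRingType.

Local Notation S := (R * R)%type.
Local Notation Sz := (Szero R).
Local Notation S_sub := (S_sub (@Smul R) Sz).
Local Notation S_Base := (S_Base (@Sadd R) (@Smul R) Sz).
Local Notation ssub := (ssub (@Sadd R) (@Sopp R)).

Local Ltac coord_ring :=
  rewrite /Defs.ssub /Sadd /Sopp /Smul /Sone /Szero /=; congr pair; ring.

Lemma Sadd_comm_group : is_comm_group (@Sadd R) (@Sopp R) Sz.
Proof.
split; first by move=> [? ?] [? ?] [? ?]; coord_ring.
split; first by move=> [? ?] [? ?]; coord_ring.
by split=> -[? ?]; coord_ring.
Qed.

Lemma Smul0l (s : S) : Smul Sz s = (s.2, 0).
Proof. by case: s => x y; coord_ring. Qed.

Lemma Smul0r (s : S) : Smul s Sz = (s.2, 0).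
Proof. by case: s => x y; coord_ring. Qed.

Lemma S_subE (alpha s : S) : S_sub alpha s <-> alpha = (s.2, 0).
Proof. by rewrite /Defs.S_sub Smul0l Smul0r; split=> [[]|->]. Qed.

Lemma S_sub0E (s : S) : S_sub Sz s <-> s.2 = 0.
Proof. by rewrite S_subE; split=> [[]|->]. Qed.

Lemma S_LambdaE (alpha : S) : S_Lambda (@Smul R) Sz alpha <-> alpha.2 = 0.
Proof.
split=> [[s /S_subE ->] //|alpha2_0].
by exists (0, alpha.1); apply/S_subE; rewrite -alpha2_0; case: alpha {alpha2_0}.
Qed.

Lemma S_structure : S_Structure (@Sadd R) (@Smul R) (@Sopp R) Sz.
Proof.
split; first exact: Sadd_comm_group.
exists (0, 1); left; rewrite Smul0l; case=> /eqP.
by rewrite oner_eq0.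
Qed.

Lemma Smul_comm : S_Commutative (@Smul R).
Proof. by move=> [? ?] [? ?]; coord_ring. Qed.

Lemma Smul_wheel_distributive : Wheel_Distributive (@Sadd R) (@Smul R) Sz.
Proof. by move=> [? ?] [? ?] [? ?]; coord_ring. Qed.

Lemma Smul_S_associative :
  S_Associative (@Sadd R) (@Smul R) (@Sopp R) Sz (Sone R).
Proof.
move=> [a b] [c d] [u v] /S_sub0E/= -> /S_sub0E/= ->.
by coord_ring.
Qed.

Lemma Smul1l (s : S) : Smul (Sone R) s = s.
Proof. by case: s => u v; coord_ring. Qed.

Lemma Sone_unity : S_Unity (@Smul R) Sz (Sone R).
Proof.
split; first exact/S_LambdaE.
by move=> s; rewrite Smul1l Smul_comm Smul1l.
Qed.

Lemma S_Base_line (a : R) : S_Base (a, 0) (0, a).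
Proof.
split; first exact/S_subE.
split; first by move=> [b c] /S_sub0E/= c0; apply/S_subE; rewrite /= c0 addr0.
move=> [x y] /S_subE [<-]; exists (x, 0); split; first exact/S_sub0E.
by coord_ring.
Qed.

Lemma S_Base_Lambda (alpha : S) :
  S_Lambda (@Smul R) Sz alpha -> S_Base alpha (0, alpha.1).
Proof. by case: alpha => a b /S_LambdaE/= ->; apply: S_Base_line. Qed.

Lemma standard_base_line (a : R) :
  ssub (Smul (a, 0) (Sadd (0, 1) (Sone R))) (Sone R) = (0, a).
Proof. by coord_ring. Qed.

Lemma S_standard_bases : Standard_Bases (@Sadd R) (@Smul R) (@Sopp R) Sz (Sone R).
Proof.
split.
  split; first by exists Sz; apply/S_sub0E.
  by move=> alpha /S_Base_Lambda; exists (0, alpha.1).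
split; first exact: Smul_comm.
exists (0, 1); split; first exact: S_Base_line.
move=> [a b] /S_LambdaE/= ->.
by rewrite standard_base_line; apply: S_Base_line.
Qed.

Lemma S_sub0_Sone_mul (s : S) :
  S_sub Sz s <-> exists x, S_sub Sz x /\ s = Smul (Sone R) x.
Proof.
split=> [s0|[x [x0 ->]]]; last by rewrite Smul1l.
by exists s; rewrite Smul1l.
Qed.

Lemma S_essential :
  Essential_S_Structure (@Sadd R) (@Smul R) (@Sopp R) Sz (Sone R).
Proof.
split; first exact: S_structure.
split; first exact: Smul_comm.
split; first exact: Smul_wheel_distributive.
split; first exact: Smul_S_associative.
split; first exact: S_standard_bases.
split; first exact/S_sub0E.
split; first exact/S_sub0E.
exact: S_sub0_Sone_mul.
Qed.

Lemma S_sub0_embedding :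
  iso_onto (@Sadd R) (@Smul R) +%R *%R (S_sub Sz) (fun x : R => (x, 0)).
Proof.
split; first by move=> x; apply/S_sub0E.
split; first by move=> x y [].
split; first by move=> [x y] /S_sub0E/= ->; exists x.
by split=> x y; coord_ring.
Qed.

End SRingExtension.

Theorem theorem3p4p1 (R : comNzRingType) :
  Proper_S_Ring_Extension (@Sadd R) (@Smul R) (@Sopp R) (Szero R) (Sone R)
    (+%R : R -> R -> R) ( *%R : R -> R -> R).
Proof.
split; first by split; [exact: S_essential | exists (Sone R); exact: Sone_unity].
split; last by exists (fun x : R => (x, 0)); exact: S_sub0_embedding.
split; first exact: S_structure.
by exists (S_sub (@Smul R) (Szero R) (Szero R)), (fun x => (x, 0));
  exact: S_sub0_embedding.
Qed.
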